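(* Let $S_N$ denote the $N$-th large Schröder number and $C_N=\frac{1}{N+1}\binom{2N}{N}$ the $N$-th Catalan number. For every non-negative integer $n$, $$v_3(S_{2n+1})=v_3(C_n),\qquad v_3(S_{2n+2})=1+v_3(2n+1)+v_3(C_n).$$
   Context: The large Schröder number $S_N$ is the number of lattice paths from $(0,0)$ to $(N,N)$ using steps $(1,0)$, $(0,1)$, $(1,1)$ that never go above the diagonal $y=x$ (so $S_0=1,S_1=2,S_2=6,\dots$). $v_3(y)$ denotes the $3$-adic valuation of a nonzero integer $y$. *)

From mathcomp Require Import all_boot.
Set Implicit Arguments. Unset Strict Implicit. Unset Printing Implicit Defensive.

Inductive step := E | Nst | D.

Definition step_vec (s : step) : nat * nat :=
  match s with E => (1, 0) | Nst => (0, 1) | D => (1, 1) end.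

Fixpoint all_paths (k : nat) : seq (seq step) :=
  match k with
  | 0 => [:: [::]]
  | k'.+1 => flatten [seq [:: E :: p; Nst :: p; D :: p] | p <- all_paths k']
  end.

Fixpoint valid_from (N x y : nat) (p : seq step) : bool :=
  match p with
  | [::] => (x == N) && (y == N)
  | s :: p' => let x' := x + (step_vec s).1 in let y' := y + (step_vec s).2 in
               (y' <= x') && valid_from N x' y' p'
  end.

(* Large Schroeder number: number of such paths from (0,0) to (N,N).
   Every step increases x+y by 1 or 2, so any such path has at most 2N steps. *)
Definition schroeder (N : nat) : nat :=
  sumn [seq count (valid_from N 0 0) (all_paths k) | k <- iota 0 (2 * N).+1].

Definition catalan (n : nat) : nat := 'C(2 * n, n) %/ n.+1.

From mathcomp Require Import all_boot all_algebra zify ring.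
Import GRing.Theory.

Set Implicit Arguments.
Unset Strict Implicit.
Unset Printing Implicit Defensive.

(* Splitting a Schroeder path at its first step shows that the path counts are
   the coefficients of the powers of the series S with S = 1 + X S + X S^2.
   With R = X / (1 - 3X) and C(t) = 1 + t C(t)^2 the Catalan series, this
   equation is solved by S = 1 + 2 R C(2 R^2), whence
     S_(N+1) = \sum_m 2^(m+1) C_m 3^(N-2m) binom(N, 2m).
   For N = 2n and N = 2n+1 the term m = n carries the claimed 3-adic valuation.
   Every other term, m = n - j with j > 0, is more divisible: by
     C_m binom(2n, 2m) binom(2j, j) = C_n binom(n, j) binom(n+1, j)
   its product with binom(2j, j) (2j+1) is divisible by 3^(2j) C_n, while
   binom(2j, j) (2j+1) <= 6^j < 3^(2j).
   The series are handled as polynomials modulo X^M, and powers of C through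
   ballot numbers, so that only Pascal's rule is needed. *)

Definition npaths (N k x y : nat) : nat := count (valid_from N x y) (all_paths k).

Lemma npaths0 N x y : npaths N 0 x y = (x == N) && (y == N).
Proof. by rewrite /npaths /=; case: (_ && _). Qed.

Lemma npathsS N k x y : npaths N k.+1 x y =
  (y <= x.+1) * npaths N k x.+1 y + (y < x) * npaths N k x y.+1
  + (y <= x) * npaths N k x.+1 y.+1.
Proof.
rewrite /npaths /= count_flatten -map_comp.
elim: (all_paths k) => [|p s IH] /=; first by rewrite !muln0.
rewrite IH /= !addn0 !addn1 ltnS.
by case: (y <= x.+1); case: (y < x); case: (y <= x) => /=; lia.
Qed.

Lemma npaths_eq0 N k x y :
  N + N < x + y + k \/ N < x \/ N < y -> npaths N k x y = 0.
Proof.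
elim: k x y => [|k IH] x y H.
  by rewrite npaths0; case: eqP => // Ex; case: eqP => // Ey; lia.
by rewrite npathsS !IH //; lia.
Qed.

Definition schroeder_from (N x y : nat) : nat := \sum_(k < (N + N).+1) npaths N k x y.

Lemma schroederE N : schroeder N = schroeder_from N 0 0.
Proof.
rewrite /schroeder /schroeder_from sumnE big_map.
by rewrite -(subn0 (2 * N).+1) -/(index_iota 0 _) big_mkord addnn -mul2n.
Qed.

Lemma schroeder_from_eq0 N x y : N < x \/ N < y -> schroeder_from N x y = 0.
Proof. by move=> H; rewrite /schroeder_from big1 // => k _; apply: npaths_eq0; right. Qed.

Lemma schroeder_fromS N x y : schroeder_from N x y = (x == N) && (y == N)
  + (y <= x.+1) * schroeder_from N x.+1 y + (y < x) * schroeder_from N x y.+1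
  + (y <= x) * schroeder_from N x.+1 y.+1.
Proof.
have tail x' y' : 0 < x' + y' ->
    \sum_(k < N + N) npaths N k x' y' = schroeder_from N x' y'.
  move=> pos; rewrite /schroeder_from big_ord_recr /= npaths_eq0 ?addn0 //; lia.
rewrite {1}/schroeder_from big_ord_recl /= npaths0 -!addnA; congr (_ + _).
rewrite -!tail ?addSn ?addnS // !big_distrr -!big_split /=.
by apply: eq_bigr => k _; rewrite npathsS addnA.
Qed.

Lemma schroeder_from_top N y : y <= N -> schroeder_from N N y = 1.
Proof.
have [k] := ubnP (N - y); elim: k y => // k IH y ltNyk leyN.
rewrite schroeder_fromS !(@schroeder_from_eq0 N N.+1); try by left.
rewrite !muln0 !addn0; have [->|neyN] := eqVneq y N; first by rewrite ltnn eqxx.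
by rewrite andbF IH; lia.
Qed.

Lemma central_bin_succ_le m : 'C(2 * m, m.+1) <= 'C(2 * m, m).
Proof.
rewrite -(leq_pmul2l (ltn0Sn m)) mul_bin_left.
by rewrite (_ : 2 * m - m = m); [apply: leq_mul | lia].
Qed.

Lemma catalanE m : catalan m = 'C(2 * m, m) - 'C(2 * m, m.+1).
Proof.
have lower := mul_bin_left (2 * m) m.
rewrite (_ : 2 * m - m = m) in lower; last by lia.
have key : 'C(2 * m, m) = m.+1 * ('C(2 * m, m) - 'C(2 * m, m.+1)).
  by rewrite mulnBr lower mulSn addnK.
by rewrite /catalan {1}key mulKn.
Qed.

Lemma catalan_mul m : catalan m * m.+1 = 'C(2 * m, m).
Proof.
rewrite catalanE mulnC mulnBr mul_bin_left (_ : 2 * m - m = m); last by lia.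
by rewrite mulSn addnK.
Qed.

Lemma catalan_gt0 m : 0 < catalan m.
Proof.
have : 0 < catalan m * m.+1 by rewrite catalan_mul bin_gt0; lia.
by rewrite muln_gt0 => /andP [].
Qed.

Definition schroeder_term (N m : nat) : nat :=
  2 ^ m.+1 * catalan m * (3 ^ (N - 2 * m) * 'C(N, 2 * m)).

Local Open Scope ring_scope.

(* [ballot j m] = j / (2m + j) * binom(2m + j, m) is the coefficient of t^m in
   C(t)^j, where C(t) = 1 + t C(t)^2 is the Catalan series. *)
Definition ballot (j m : nat) : int :=
  if j is j'.+1 then 'C(2 * m + j', m)%:Z - 'C(2 * m + j', m + j)%:Z
  else (m == 0)%:Z.

Lemma ballot0 j : ballot j 0 = 1.
Proof. by case: j => //= j; rewrite muln0 add0n bin0 bin_small. Qed.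

Lemma ballot1 m : ballot 1 m = (catalan m)%:Z.
Proof. by rewrite /= !addn0 addn1 catalanE subzn // central_bin_succ_le. Qed.

Lemma ballotSE j m : ballot j.+1 m = 'C(2 * m + j, m)%:Z - 'C(2 * m + j, m + j.+1)%:Z.
Proof. by []. Qed.

Lemma ballotS j m : ballot j.+1 m.+1 = ballot j m.+1 + ballot j.+2 m.
Proof.
case: j => [|j]; rewrite !ballotSE.
  rewrite (_ : ballot 0 m.+1 = 0) // add0r.
  rewrite (_ : 2 * m.+1 + 0 = (2 * m + 1).+1)%N; last by lia.
  rewrite (_ : m.+1 + 1 = m.+2)%N; last by lia.
  by rewrite binS (binS _ m.+1) addn2; lia.
rewrite (_ : 2 * m.+1 + j.+1 = (2 * m + j.+2).+1)%N; last by lia.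
rewrite (_ : 2 * m.+1 + j = 2 * m + j.+2)%N; last by lia.
rewrite (_ : m.+1 + j.+2 = (m + j.+2).+1)%N; last by lia.
rewrite (_ : m.+1 + j.+1 = m + j.+2)%N; last by lia.
rewrite (_ : m + j.+3 = (m + j.+2).+1)%N; last by lia.
by rewrite binS (binS _ (m + j.+2)); lia.
Qed.

Definition binomial_sum {V : nmodType} (f : nat -> V) (d : nat) : V :=
  \sum_(j < d.+1) f j *+ 'C(d, j).

Lemma binomial_sumS (V : nmodType) (f : nat -> V) d :
  binomial_sum f d.+1 = binomial_sum f d + binomial_sum (fun j => f j.+1) d.
Proof.
rewrite /binomial_sum big_ord_recl [in RHS]big_ord_recl !bin0 -addrA; congr (_ + _).
under eq_bigr => i _ do rewrite binS mulrnDr.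
by rewrite big_split /= [X in X + _]big_ord_recr /= bin_small // mulr0n addr0.
Qed.

Definition dvdXn (M : nat) (p : {poly int}) := exists q, p = 'X^M * q.

Lemma dvdXnD M p q : dvdXn M p -> dvdXn M q -> dvdXn M (p + q).
Proof. by move=> [a ->] [b ->]; exists (a + b); rewrite mulrDr. Qed.

Lemma dvdXnN M p : dvdXn M p -> dvdXn M (- p).
Proof. by move=> [a ->]; exists (- a); rewrite mulrN. Qed.

Lemma dvdXnB M p q : dvdXn M p -> dvdXn M q -> dvdXn M (p - q).
Proof. by move=> dp dq; apply/dvdXnD/dvdXnN. Qed.

Lemma dvdXnMl M p q : dvdXn M q -> dvdXn M (p * q).
Proof. by move=> [a ->]; exists (p * a); rewrite mulrCA. Qed.

Lemma dvdXnMr M p q : dvdXn M p -> dvdXn M (p * q).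
Proof. by rewrite mulrC; apply: dvdXnMl. Qed.

Lemma dvdXn_sum M (I : finType) (F : I -> {poly int}) :
  (forall i, dvdXn M (F i)) -> dvdXn M (\sum_i F i).
Proof.
move=> dF; elim/big_ind: _ => //; last exact: dvdXnD.
by exists 0; rewrite mulr0.
Qed.

Lemma dvdXn_XnM M k p : (M <= k)%N -> dvdXn M ('X^k * p).
Proof. by move=> leMk; exists ('X^(k - M) * p); rewrite mulrA -exprD subnKC. Qed.

Lemma dvdXn_coef M p i : dvdXn M p -> (i < M)%N -> p`_i = 0.
Proof. by move=> [a ->] ltiM; rewrite coefXnM ltiM. Qed.

Section TruncatedSeries.

Variable M : nat.
Hypothesis M_gt0 : (0 < M)%N.

(* The truncation of the power series X / (1 - 3X) at order M + 1. *)
Definition rat3 : {poly int} := 'X * \sum_(i < M) (3 * 'X) ^+ i.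

Lemma rat3_fixpoint : 'X * (1 + 3 * rat3) - rat3 = 3 ^+ M * 'X^(M.+1).
Proof.
have geom := subrX1 (3 * 'X : {poly int}) M.
rewrite /rat3; set S := \sum_(i < M) _.
have -> : 'X * (1 + 3 * ('X * S)) - 'X * S = 'X * (1 + (3 * 'X - 1) * S) by ring.
by rewrite -geom exprMn addrC subrK exprS mulrCA.
Qed.

Lemma dvdXn_rat3_fixpoint : dvdXn M ('X * (1 + 3 * rat3) - rat3).
Proof. by rewrite rat3_fixpoint mulrC; apply: dvdXn_XnM. Qed.

Lemma dvdXn_rat3_inverse : dvdXn M ((1 - 3 * 'X) * (1 + 3 * rat3) - 1).
Proof.
have -> : (1 - 3 * 'X) * (1 + 3 * rat3) - 1 = - 3 * ('X * (1 + 3 * rat3) - rat3)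
  by ring.
exact/dvdXnMl/dvdXn_rat3_fixpoint.
Qed.

Lemma rat3X_coef0 L : (rat3 ^+ L.+1)`_0 = 0.
Proof. by rewrite exprS /rat3 -mulrA coefXM. Qed.

Lemma rat3X_coefS L n : (n < M)%N ->
  (rat3 ^+ L.+1)`_n.+1 = (rat3 ^+ L)`_n + 3 * (rat3 ^+ L.+1)`_n.
Proof.
move=> ltnM.
have fp : rat3 = 'X * (1 + 3 * rat3) - 3 ^+ M * 'X^(M.+1)
  by rewrite -rat3_fixpoint; ring.
have E : rat3 ^+ L.+1 =
    'X * (rat3 ^+ L + 3 * rat3 ^+ L.+1) - 'X^(M.+1) * (3 ^+ M * rat3 ^+ L).
  by rewrite exprSr; move: (rat3 ^+ L) => q; rewrite {1}fp; ring.
rewrite {1}E coefB coefXM coefXnM ltnS ltnM subr0 coefD.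
by rewrite -polyC_natr coefCM.
Qed.

Lemma rat3X_coef L n : (n < M)%N ->
  (rat3 ^+ L.+1)`_n.+1 = (3 ^ (n - L) * 'C(n, L))%:R.
Proof.
elim: n L => [|n IH] [|L] ltnM; rewrite rat3X_coefS //.
- by rewrite rat3X_coef0 expr0 coef1.
- by rewrite !rat3X_coef0 mulr0 addr0 bin_small.
- by rewrite expr0 coef1 IH 1?ltnW // add0r !subn0 !bin0 !muln1 expnS natrM.
rewrite !IH 1?ltnW // binS subSS.
have [ltLn | lenL] := ltnP L n; last first.
  by rewrite (@bin_small n L.+1) ?ltnS // muln0 mulr0 addr0 add0n.
by rewrite -(subnSK ltLn) expnS !natrM natrD; ring.
Qed.

Lemma dvdXn_rat3X k : (M <= k)%N -> dvdXn M (rat3 ^+ k).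
Proof. by move=> leMk; rewrite /rat3 exprMn; apply: dvdXn_XnM. Qed.

Definition catcoef (j m : nat) : int := 2 ^+ (m + j) * ballot j m.

Lemma catcoefS j m : catcoef j.+1 m.+1 = 2 * catcoef j m.+1 + catcoef j.+2 m.
Proof. by rewrite /catcoef ballotS !addnS !addSn !exprS; ring. Qed.

Lemma catcoefS0 j : catcoef j.+1 0 = 2 * catcoef j 0.
Proof. by rewrite /catcoef !ballot0 addnS exprS mulrA. Qed.

(* With R = X / (1 - 3X) and C the Catalan series, [catpow j] truncates
   (2 R C(2 R^2))^j = \sum_m 2^(m + j) (ballot j m) R^(2m + j). *)
Definition catpow (j : nat) : {poly int} :=
  \sum_(m < M) (catcoef j m)%:P * rat3 ^+ (2 * m + j).

Lemma catpow0 : catpow 0 = 1.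
Proof.
rewrite /catpow; case: M M_gt0 => // M' _.
rewrite big_ord_recl big1 => [|m _]; first by rewrite /catcoef ballot0 mulr1 mul1r addr0.
by rewrite /catcoef /ballot /= mulr0 mul0r.
Qed.

(* C^(j+1) = C^j + t C^(j+2) at t = 2 R^2 (see [ballotS]); the truncation
   leaves a single term of order at least M. *)
Lemma dvdXn_catpowS j :
  dvdXn M (catpow j.+1 - 2 * rat3 * catpow j - rat3 * catpow j.+2).
Proof.
rewrite /catpow; case eM: M => [|M']; first by eexists; rewrite mul1r.
rewrite big_ord_recl [X in _ - _ * X - _]big_ord_recl.
rewrite [X in _ - _ - _ * X]big_ord_recr /= !mulrDr !mulr_sumr.
have shift : \sum_(i < M')
    (catcoef j.+1 (bump 0 i))%:P * rat3 ^+ (2 * bump 0 i + j.+1) =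
  \sum_(i < M') 2 * rat3 * ((catcoef j (bump 0 i))%:P * rat3 ^+ (2 * bump 0 i + j))
  + \sum_(i < M') rat3 * ((catcoef j.+2 i)%:P * rat3 ^+ (2 * i + j.+2)).
  rewrite -big_split; apply: eq_bigr => i _ /=.
  rewrite /bump /= add1n catcoefS rmorphD rmorphM /= polyC_natr.
  rewrite (_ : 2 * i.+1 + j.+1 = (2 * i + j.+2).+1)%N; last by lia.
  rewrite (_ : 2 * i.+1 + j = 2 * i + j.+2)%N; last by lia.
  by rewrite exprS; ring.
rewrite shift catcoefS0 rmorphM /= polyC_natr muln0 !add0n exprS.
rewrite (_ : _ - _ - _ = - (rat3 * (catcoef j.+2 M')%:P * rat3 ^+ (2 * M' + j.+2)));
  last by ring.
rewrite mulrC mulrA -exprSr -eM.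
by apply/dvdXnN/dvdXnMr/dvdXn_rat3X; rewrite eM; lia.
Qed.

(* Modulo X^M, (1 - 3X) (1 + 3 rat3) = 1 and X (1 + 3 rat3) = rat3. *)
Lemma dvdXn_catpow_schroeder j :
  dvdXn M (catpow j.+1 - 'X * (2 * catpow j + 3 * catpow j.+1 + catpow j.+2)).
Proof.
set L := 2 * _ + _ + _; set Q := _ - _.
have dvdQ : dvdXn M ((1 + 3 * rat3) * Q).
  have -> : (1 + 3 * rat3) * Q = (catpow j.+1 - 2 * rat3 * catpow j - rat3 * catpow j.+2)
      - ('X * (1 + 3 * rat3) - rat3) * L by rewrite /Q /L; ring.
  by apply: dvdXnB; [exact: dvdXn_catpowS | exact/dvdXnMr/dvdXn_rat3_fixpoint].
have -> : Q = (1 - 3 * 'X) * ((1 + 3 * rat3) * Q)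
    - ((1 - 3 * 'X) * (1 + 3 * rat3) - 1) * Q by ring.
by apply: dvdXnB; [exact: dvdXnMl | exact/dvdXnMr/dvdXn_rat3_inverse].
Qed.

(* [schpow d] truncates S^d, where S = 1 + 2 R C(2 R^2) is the generating
   series of the large Schroeder numbers, so that S = 1 + X S + X S^2. *)
Definition schpow (d : nat) : {poly int} := binomial_sum catpow d.

Lemma dvdXn_schpowS d :
  dvdXn M (schpow d.+1 - schpow d - 'X * schpow d.+1 - 'X * schpow d.+2).
Proof.
have -> : schpow d.+1 - schpow d - 'X * schpow d.+1 - 'X * schpow d.+2 =
    \sum_(j < d.+1) (catpow j.+1 - 'X * (2 * catpow j + 3 * catpow j.+1 + catpow j.+2))
                    *+ 'C(d, j).
  under eq_bigr => j _ do rewrite mulrnBl -mulrnAr !mulrnDl -!mulrnAr.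
  rewrite sumrB -mulr_sumr !big_split -!mulr_sumr /=.
  by rewrite /schpow !binomial_sumS /binomial_sum; ring.
apply: dvdXn_sum => j; rewrite -[X in dvdXn _ X]mulr_natl.
exact/dvdXnMl/dvdXn_catpow_schroeder.
Qed.

Lemma schpow0 : schpow 0 = 1.
Proof. by rewrite /schpow /binomial_sum big_ord1 catpow0. Qed.

Lemma schpow_coef0 d : (schpow d)`_0 = 1.
Proof.
elim: d => [|d IH]; first by rewrite schpow0 coef1.
have := dvdXn_coef (dvdXn_schpowS d) M_gt0.
by rewrite !coefB !coefXM /= !subr0 IH => /eqP; rewrite subr_eq0 => /eqP.
Qed.

Lemma schpow_coefS d u : (u.+1 < M)%N ->
  (schpow d.+1)`_u.+1 = (schpow d)`_u.+1 + (schpow d.+1)`_u + (schpow d.+2)`_u.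
Proof.
move=> ltuM; have := dvdXn_coef (dvdXn_schpowS d) ltuM.
rewrite !coefB !coefXM /= => vanish.
by apply/eqP; rewrite -subr_eq0; apply/eqP; rewrite -[RHS]vanish; ring.
Qed.

Lemma schpow1_coef n : (n < M)%N -> (schpow 1)`_n.+1 =
  \sum_(m < M) (schroeder_term n m)%:R.
Proof.
move=> ltnM; rewrite /schpow binomial_sumS /binomial_sum !big_ord1 catpow0.
rewrite !mulr1n coefD coef1 add0r coef_sum; apply: eq_bigr => m _.
rewrite coefCM addn1 rat3X_coef // /catcoef ballot1.
by rewrite /schroeder_term !natrM !natrX addn1 !natz.
Qed.

End TruncatedSeries.

Lemma schroeder_from_coef N x y : (y <= x)%N -> (x <= N)%N ->
  (schroeder_from N x y)%:R = (schpow N.+1 (x - y).+1)`_(N - x) :> int.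
Proof.
have [k] := ubnP (N - x + (N - y)); elim: k x y => // k IH x y ltk le_yx le_xN.
have [->|ltxN] := eqVneq x N.
  by rewrite subnn schroeder_from_top ?(leq_trans le_yx) // schpow_coef0.
have {}ltxN : (x < N)%N by rewrite ltn_neqAle ltxN.
have eNx : (N - x = (N - x.+1).+1)%N by rewrite subnSK.
rewrite schroeder_fromS (ltn_eqF ltxN) (leqW le_yx) le_yx !mul1n add0n !natrD.
rewrite !IH ?subSS ?(subSn le_yx) ?eNx ?schpow_coefS; try lia.
have [<-|ne_yx] := eqVneq y x.
  by rewrite ltnn mul0n subnn schpow0 // coef1 /=; ring.
have lt_yx : (y < x)%N by rewrite ltn_neqAle ne_yx.
by rewrite lt_yx mul1n IH ?(subnSK lt_yx) ?eNx; try lia; ring.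
Qed.

Local Close Scope ring_scope.

Lemma schroederS N : schroeder N.+1 = \sum_(m < N.+2) schroeder_term N m.
Proof.
apply/eqP; rewrite -(Num.Theory.eqr_nat int) schroederE schroeder_from_coef // subn0.
by rewrite schpow1_coef // natr_sum.
Qed.

Lemma logn_sum_dominant p K (F : nat -> nat) i0 : prime p -> i0 < K -> 0 < F i0 ->
    (forall i, i < K -> i != i0 -> p ^ (logn p (F i0)).+1 %| F i) ->
  logn p (\sum_(i < K) F i) = logn p (F i0).
Proof.
move=> p_pr ltiK F_gt0 dvdF; rewrite (bigD1 (Ordinal ltiK)) //=.
set e := logn p (F i0); set rest := \sum_(i < K | _) _.
have dvd_rest : p ^ e.+1 %| rest by apply: dvdn_sum => i ne_i; apply: dvdF.
have Frest_gt0 : 0 < F i0 + rest by rewrite ltn_addr.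
apply/eqP; rewrite eqn_leq; apply/andP; split.
  by rewrite leqNgt -pfactor_dvdn // dvdn_addl // pfactor_dvdn // ltnn.
rewrite -pfactor_dvdn // dvdn_add ?pfactor_dvdnn //.
by apply: dvdn_trans dvd_rest; rewrite dvdn_exp2l.
Qed.

Lemma logn_lt_dvdn p k a b c : prime p -> 0 < a -> 0 < b -> 0 < c ->
  logn p b < k -> p ^ k * c %| a * b -> p ^ (logn p c).+1 %| a.
Proof.
move=> p_pr a_gt0 b_gt0 c_gt0 ltbk dvd_ab.
have := dvdn_leq_log p (_ : 0 < a * b) dvd_ab; rewrite muln_gt0 a_gt0 b_gt0 => /(_ isT).
rewrite !lognM ?expn_gt0 ?(prime_gt0 p_pr) // pfactorK // pfactor_dvdn //.
lia.
Qed.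

Lemma central_binS j : j.+1 * 'C(2 * j.+1, j.+1) = 2 * (2 * j).+1 * 'C(2 * j, j).
Proof.
have step1 := mul_bin_diag (2 * j.+1) j.
have step2 := mul_bin_diag (2 * j).+1 j.
have sym : 'C((2 * j).+1, j.+1) = 'C((2 * j).+1, j).
  by rewrite -bin_sub; [congr 'C(_, _); lia | lia].
rewrite (_ : (2 * j.+1).-1 = (2 * j).+1) in step1; last by lia.
rewrite /= sym in step2.
by rewrite -step1 -mulnA -step2 mulnA.
Qed.

Lemma central_bin_odd_le j : 'C(2 * j, j) * (2 * j).+1 <= 6 ^ j.
Proof.
elim: j => [|j IH] //.
have := central_binS j; rewrite -(leq_pmul2l (ltn0Sn j)) expnS.
move: IH; set c := 'C(2 * j, j); set c' := 'C(2 * j.+1, j.+1); set t := 6 ^ j.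
nia.
Qed.

Lemma logn3_central_lt j : 0 < j -> logn 3 ('C(2 * j, j) * (2 * j).+1) < 2 * j.
Proof.
move=> j_gt0; set B := _ * _.
have B_gt0 : 0 < B by rewrite muln_gt0 bin_gt0 andbT; lia.
rewrite -(ltn_exp2l _ _ (isT : 1 < 3)).
apply: leq_ltn_trans (dvdn_leq B_gt0 (pfactor_dvdnn 3 B)) _.
by apply: leq_ltn_trans (central_bin_odd_le j) _; rewrite expnM ltn_exp2r.
Qed.

Lemma bin_fact_add a b : 'C(a + b, a) * (a`! * b`!) = (a + b)`!.
Proof. by rewrite -{2}(addKn a b) bin_fact // leq_addr. Qed.

Lemma catalan_fact k : catalan k * (k`! * k.+1`!) = (2 * k)`!.
Proof.
rewrite mul2n -addnn -bin_fact_add.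
have := catalan_mul k; rewrite mul2n -addnn => <-.
by rewrite factS; ring.
Qed.

Lemma catalan_bin_exchange m j :
  catalan m * 'C(2 * (m + j), 2 * m) * 'C(2 * j, j) =
  catalan (m + j) * 'C(m + j, j) * 'C((m + j).+1, j).
Proof.
have P_gt0 : 0 < m`! * m.+1`! * (j`! * j`!) by rewrite !muln_gt0 !fact_gt0.
apply/eqP; rewrite -(eqn_pmul2r P_gt0); apply/eqP.
have f1 := bin_fact_add j j; have f2 := bin_fact_add (2 * m) (2 * j).
have f3 := bin_fact_add j m; have f4 := bin_fact_add j m.+1.
rewrite addnn -mul2n in f1; rewrite -mulnDr in f2.
rewrite addnC in f3; rewrite addnS addnC in f4.
transitivity ((2 * (m + j))`!).
  by rewrite -f2 -catalan_fact -f1; ring.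
by rewrite -catalan_fact -f3 -f4; ring.
Qed.

Lemma schroeder_term_eq0 N m : N < 2 * m -> schroeder_term N m = 0.
Proof. by move=> ltN2m; rewrite /schroeder_term bin_small ?muln0. Qed.

Lemma schroeder_term_even_dvdn m j : 0 < j ->
  3 ^ (logn 3 (catalan (m + j))).+1 %| schroeder_term (2 * (m + j)) m.
Proof.
move=> j_gt0; rewrite /schroeder_term (_ : 2 * (m + j) - 2 * m = 2 * j); last by lia.
apply: (@logn_lt_dvdn 3 (2 * j) _ ('C(2 * j, j) * (2 * j).+1)) => //.
- by rewrite !muln_gt0 catalan_gt0 !expn_gt0 bin_gt0; lia.
- by rewrite muln_gt0 bin_gt0 andbT; lia.
- exact: catalan_gt0.
- exact: logn3_central_lt.
rewrite [X in _ %| X](_ : _ = 3 ^ (2 * j) * (2 ^ m.+1 * (2 * j).+1) *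
    (catalan m * 'C(2 * (m + j), 2 * m) * 'C(2 * j, j))); last by ring.
rewrite catalan_bin_exchange -[X in _ %| X]mulnA dvdn_pmul2l ?expn_gt0 //.
exact/dvdn_mull/dvdn_mulr/dvdn_mulr.
Qed.

Lemma schroeder_term_odd_dvdn m j : 0 < j ->
  3 ^ (logn 3 (3 * (2 * (m + j)).+1 * catalan (m + j))).+1
  %| schroeder_term (2 * (m + j)).+1 m.
Proof.
move=> j_gt0; have e2j : (2 * (m + j)).+1 - 2 * m = (2 * j).+1 by lia.
rewrite /schroeder_term e2j.
apply: (@logn_lt_dvdn 3 (2 * j) _ ('C(2 * j, j) * (2 * j).+1)) => //.
- by rewrite !muln_gt0 catalan_gt0 !expn_gt0 bin_gt0; lia.
- by rewrite muln_gt0 bin_gt0 andbT; lia.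
- by rewrite !muln_gt0 catalan_gt0.
- exact: logn3_central_lt.
have down := mul_bin_down (2 * (m + j)).+1 (2 * m); rewrite /= e2j in down.
rewrite [X in _ %| X](_ : _ = 3 ^ (2 * j) * 3 * 2 ^ m.+1 * catalan m * 'C(2 * j, j) *
    ((2 * j).+1 * 'C((2 * (m + j)).+1, 2 * m))); last by rewrite [3 ^ _]expnS; ring.
rewrite -down [X in _ %| X](_ : _ = 3 ^ (2 * j) * (2 ^ m.+1 * (3 * (2 * (m + j)).+1)) *
    (catalan m * 'C(2 * (m + j), 2 * m) * 'C(2 * j, j))); last by ring.
rewrite catalan_bin_exchange -[X in _ %| X]mulnA dvdn_pmul2l ?expn_gt0 //.
by apply: dvdn_mul; [exact/dvdn_mull | exact/dvdn_mulr/dvdn_mulr].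
Qed.

Lemma logn_schroeder_dominant N n c : n <= N < 2 * n.+1 -> 0 < c ->
    schroeder_term N n = 2 ^ n.+1 * c ->
    (forall m, m < n -> 3 ^ (logn 3 c).+1 %| schroeder_term N m) ->
  logn 3 (schroeder N.+1) = logn 3 c.
Proof.
move=> /andP[le_nN ltN] c_gt0 term_n dvd_lt.
have logn_c : logn 3 (schroeder_term N n) = logn 3 c.
  by rewrite term_n lognM ?expn_gt0 // lognX muln0.
rewrite schroederS -logn_c (logn_sum_dominant (i0 := n)) //.
- by lia.
- by rewrite term_n muln_gt0 expn_gt0.
move=> m _ ne_mn; rewrite logn_c.
have [lt_mn | lt_nm | eq_mn] := ltngtP m n.
- exact: dvd_lt.
- by rewrite schroeder_term_eq0 //; lia.
- by rewrite eq_mn eqxx in ne_mn.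
Qed.

Theorem theorem6 (n : nat) :
  logn 3 (schroeder (2 * n + 1)) = logn 3 (catalan n) /\
  logn 3 (schroeder (2 * n + 2)) = 1 + logn 3 (2 * n + 1) + logn 3 (catalan n).
Proof.
have below m : m < n -> exists2 j, 0 < j & n = m + j by exists (n - m); lia.
split.
  rewrite addn1 (@logn_schroeder_dominant _ n (catalan n)).
  - by [].
  - by lia.
  - exact: catalan_gt0.
  - by rewrite /schroeder_term subnn binn !muln1.
  by move=> m /below [j j_gt0 ->]; apply: schroeder_term_even_dvdn.
rewrite addn2 (@logn_schroeder_dominant _ n (3 * (2 * n).+1 * catalan n)).
- by rewrite !lognM ?catalan_gt0 // addn1.
- by lia.
- by rewrite !muln_gt0 catalan_gt0.
- by rewrite /schroeder_term subSnn binSn expn1; ring.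
by move=> m /below [j j_gt0 ->]; apply: schroeder_term_odd_dvdn.
Qed.
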